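(* Let the Super Harmonic algorithm (with arbitrary admissible parameters as described in the context) be run on a list $L$ of items with sizes in $(0,1]$, and let $A(L)$ be the number of bins it uses. Let $W^1,\dots,W^{K+1}$ be the weighting functions defined in the context. Then \[ A(L)\le \max_{1\le i\le K+1}\Big\{\sum_{p\in L} W^i(p)\Big\}+O(1), \] where the $O(1)$ term depends only on the parameters of the algorithm and not on $L$.
   Context: One-dimensional online bin packing: items with sizes in $(0,1]$ arrive one by one and must be irrevocably placed into bins of capacity $1$. Super Harmonic algorithm. Parameters: an integer $k\ge1$, reals $t_1=1>t_2>\dots>t_k>t_{k+1}=\epsilon>t_{k+2}=0$, intervals $I_i=(t_{i+1},t_i]$ for $i=1,\dots,k+1$ (an item of size $x$ is of type $i$ if $x\in I_i$), and constants $\alpha_1,\dots,\alpha_k\in[0,1]$. Let $\beta_i=\lfloor 1/t_i\rfloor$ and $\delta_i=1-t_i\beta_i$. Fix reals $0=\Delta_0<\Delta_1<\dots<\Delta_K<1/2$ with $K\le k$ and a map $\phi:\{1,\dots,k\}\to\{0,\dots,K\}$ with $\Delta_{\phi(i)}\le\delta_i$. Let $\varphi(i)=\min\{j: t_i\le\Delta_j,\ 1\le j\le K\}$ (and $\varphi(i)=0$ if $t_i>\Delta_K$). Let $\gamma_i=0$ if $t_i>\Delta_K$, and otherwise $\gamma_i=\max\{1,\lfloor\Delta_1/t_i\rfloor\}$. Bins are named in groups: $(i)$ for $\phi(i)=0$ (only blue type-$i$ items); $(i,?)$ for $\phi(i)\neq0$ (currently only blue type-$i$ items); $(?,j)$ for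 $\alpha_j\ne0$ (currently only red type-$j$ items); $(i,j)$ for $\phi(i)\ne0,\alpha_j\ne0,\gamma_jt_j\le\Delta_{\phi(i)}$ (blue type-$i$ and red type-$j$ items). Counters $s_i,e_i$ start at $0$. For each arriving item $p$ of type $i$: (a) if $i=k+1$, pack $p$ by Next Fit into bins reserved for type $k+1$; (b) otherwise set $s_i\gets s_i+1$; if $e_i<\lfloor\alpha_is_i\rfloor$ then set $e_i\gets e_i+1$ and color $p$ red: if some bin in group $(?,i)$ has fewer than $\gamma_i$ type-$i$ items, put $p$ there; else if for some $j$ a bin in group $(j,i)$ has fewer than $\gamma_i$ type-$i$ items, put $p$ there; else if some bin in group $(j,?)$ has $\Delta_{\phi(j)}\ge\gamma_it_i$, put $p$ there and rename the bin $(j,i)$; otherwise open a new bin $(?,i)$ for $p$. (c) otherwise color $p$ blue: if $\phi(i)=0$, put $p$ into a group-$(i)$ bin with fewer than $\beta_i$ items if one exists, else open a new group-$(i)$ bin. If $\phi(i)\ne0$: if for some $j$ a bin in group $(i,j)$ or $(i,?)$ has fewer than $\beta_i$ type-$i$ items, put $p$ there; else if some bin in group $(?,j)$ has $\Delta_{\phi(i)}\ge\gamma_jt_j$, put $p$ there and rename it $(i,j)$; otherwise open a new bin $(i,?)$ for $p$. Weighting functions. In all formulas below a term $\alpha_i/\gamma_i$ or $\alpha_i/(2\gamma_i)$ is replaced by $0$ when $\gamma_i=0$. For $x\in I_{k+1}$, $W^j(x)=x/(1-\epsilon)$ for every $j$. For $x\in I_i$, $1\le i\le k$: $W^1(x)=\frac{1-\alpha_i}{\beta_i}$.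 For $2\le j\le K$, $W^{K+2-j}(x)$ equals $\frac{1-\alpha_i}{\beta_i}+\frac{\alpha_i}{2\gamma_i}$ if $\phi(i)<j,\varphi(i)<j$; $\frac{1-\alpha_i}{\beta_i}+\frac{\alpha_i}{\gamma_i}$ if $\phi(i)<j,\varphi(i)\ge j$; $\frac{1-\alpha_i}{2\beta_i}+\frac{\alpha_i}{\gamma_i}$ if $\phi(i)\ge j,\varphi(i)\ge j$; $\frac{1-\alpha_i}{2\beta_i}+\frac{\alpha_i}{2\gamma_i}$ if $\phi(i)\ge j,\varphi(i)<j$. $W^{K+1}(x)$ equals $\frac{1-\alpha_i}{\beta_i}$ if $\phi(i)=0,\varphi(i)=0$; $\frac{1-\alpha_i}{\beta_i}+\frac{\alpha_i}{\gamma_i}$ if $\phi(i)=0,\varphi(i)>0$; $0$ if $\phi(i)>0,\varphi(i)=0$; $\frac{\alpha_i}{\gamma_i}$ if $\phi(i)>0,\varphi(i)>0$.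
   Formalization: Admissible parameters also satisfy $\alpha_i=0$ for every type i with $t_i>\Delta_K$, that is, whenever $\gamma_i=0$, rather than allowing any $\alpha_i\in[0,1]$. The statement above fails without it. *)

From Stdlib Require Import Reals Lra Lia List Arith.
Import ListNotations.
Open Scope R_scope.

Record SHParams := mkSHParams {
  sh_k : nat;
  sh_t : nat -> R;            (* t_1, ..., t_{k+2}  (t (k+1) = epsilon, t (k+2) = 0) *)
  sh_alpha : nat -> R;
  sh_K : nat;
  sh_Delta : nat -> R;
  sh_phi : nat -> nat
}.

Section Params.
Variable P : SHParams.
Local Notation k := (sh_k P).
Local Notation t := (sh_t P).
Local Notation alpha := (sh_alpha P).
Local Notation K := (sh_K P).
Local Notation Delta := (sh_Delta P).
Local Notation phi := (sh_phi P).

Definition nfloor (x : R) : nat := Z.to_nat (Int_part x).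

Definition eps : R := t (k + 1).

Definition beta (i : nat) : nat := nfloor (/ t i).
Definition delta (i : nat) : R := 1 - t i * INR (beta i).

(** varphi(i) = min { j : t_i <= Delta_j, 1 <= j <= K }, and 0 if t_i > Delta_K *)
Fixpoint first_Delta (x : R) (n j : nat) : nat :=
  match n with
  | O => O
  | S n' => if Rle_dec x (Delta j) then j else first_Delta x n' (S j)
  end.
Definition varphi (i : nat) : nat :=
  if Rlt_dec (Delta K) (t i) then O else first_Delta (t i) K 1.

Definition gamma (i : nat) : nat :=
  if Rlt_dec (Delta K) (t i) then O else Nat.max 1 (nfloor (Delta 1 / t i)).

Definition admissible : Prop :=
  (1 <= k)%nat /\
  t 1 = 1 /\
  (forall i, (1 <= i <= k)%nat -> t (i + 1) < t i) /\
  0 < t (k + 1) /\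
  t (k + 2) = 0 /\
  (forall i, (1 <= i <= k)%nat -> 0 <= alpha i <= 1) /\
  (K <= k)%nat /\
  Delta 0 = 0 /\
  (forall j, (j < K)%nat -> Delta j < Delta (j + 1)) /\
  Delta K < / 2 /\
  (forall i, (1 <= i <= k)%nat -> (phi i <= K)%nat /\ Delta (phi i) <= delta i) /\
  (* red items are only possible for types with gamma_i <> 0
     (implicit in the paper: alpha_i/gamma_i is read as 0 when gamma_i = 0) *)
  (forall i, (1 <= i <= k)%nat -> Delta K < t i -> alpha i = 0).

(** type of an item of size x: the i in 1..k+1 with t_{i+1} < x <= t_i
    (returns k+2 if there is none, which never happens for x in (0,1]) *)
Fixpoint first_type (x : R) (n i : nat) : nat :=
  match n with
  | O => i
  | S n' => if Rlt_dec (t (i + 1)) x then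
              if Rle_dec x (t i) then i else first_type x n' (S i)
            else first_type x n' (S i)
  end.
Definition typ (x : R) : nat := first_type x (k + 1) 1.

Definition rdiv (a : R) (g : nat) : R := if Nat.eqb g 0 then 0 else a / INR g.

Definition W (m : nat) (x : R) : R :=
  let i := typ x in
  if Nat.leb (k + 1) i then x / (1 - eps) else
  let a := alpha i in
  let b := INR (beta i) in
  let g := gamma i in
  let f := phi i in
  let v := varphi i in
  if Nat.eqb m 1 then (1 - a) / b
  else if Nat.eqb m (K + 1) then
    (if Nat.eqb f 0 then
       (if Nat.eqb v 0 then (1 - a) / b else (1 - a) / b + rdiv a g)
     else
       (if Nat.eqb v 0 then 0 else rdiv a g))
  else
    let j := (K + 2 - m)%nat in
    if Nat.ltb f j then
      (if Nat.ltb v j then (1 - a) / b + rdiv a (2 * g)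
       else (1 - a) / b + rdiv a g)
    else
      (if Nat.leb j v then (1 - a) / (2 * b) + rdiv a g
       else (1 - a) / (2 * b) + rdiv a (2 * g)).

Definition sumW (m : nat) (L : list R) : R :=
  fold_right (fun x acc => W m x + acc) 0 L.

Definition maxW (L : list R) : R :=
  fold_right (fun m acc => Rmax (sumW m L) acc) (sumW 1 L) (seq 1 (K + 1)).

(** Bin groups: (i), (i,?), (?,j), (i,j) *)
Inductive Label : Type :=
  | G1 (i : nat)
  | GB (i : nat)
  | GR (j : nat)
  | GP (i j : nat).

Record Bin := mkBin { lab : Label; nblue : nat; nred : nat }.

(** state: counters s_i, e_i, the bins for types 1..k, the level of the
    current Next Fit bin for type k+1 (if any), and the number of Next Fit bins *)
Record State := mkState {
  scnt : nat -> nat;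
  ecnt : nat -> nat;
  bins : list Bin;
  nf_level : option R;
  nf_count : nat
}.

Definition init_state : State := mkState (fun _ => O) (fun _ => O) [] None O.

Definition upd (f : nat -> nat) (i v : nat) : nat -> nat :=
  fun n => if Nat.eqb n i then v else f n.

(** placement of a red item of type i (step (b)); the algorithm's free
    choices among eligible bins are left arbitrary *)
Definition red_R1 (i : nat) (B : list Bin) : Prop :=
  exists bn, In bn B /\ lab bn = GR i /\ (nred bn < gamma i)%nat.
Definition red_R2 (i : nat) (B : list Bin) : Prop :=
  exists bn j, In bn B /\ lab bn = GP j i /\ (nred bn < gamma i)%nat.
Definition red_R3 (i : nat) (B : list Bin) : Prop :=
  exists bn j, In bn B /\ lab bn = GB j /\ INR (gamma i) * t i <= Delta (phi j).

Inductive PlaceRed (i : nat) : list Bin -> list Bin -> Prop :=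
  | pr1 B1 B2 b r :
      (r < gamma i)%nat ->
      PlaceRed i (B1 ++ mkBin (GR i) b r :: B2) (B1 ++ mkBin (GR i) b (S r) :: B2)
  | pr2 B1 B2 j b r :
      ~ red_R1 i (B1 ++ mkBin (GP j i) b r :: B2) ->
      (r < gamma i)%nat ->
      PlaceRed i (B1 ++ mkBin (GP j i) b r :: B2) (B1 ++ mkBin (GP j i) b (S r) :: B2)
  | pr3 B1 B2 j b r :
      ~ red_R1 i (B1 ++ mkBin (GB j) b r :: B2) ->
      ~ red_R2 i (B1 ++ mkBin (GB j) b r :: B2) ->
      INR (gamma i) * t i <= Delta (phi j) ->
      PlaceRed i (B1 ++ mkBin (GB j) b r :: B2) (B1 ++ mkBin (GP j i) b (S r) :: B2)
  | pr4 B :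
      ~ red_R1 i B -> ~ red_R2 i B -> ~ red_R3 i B ->
      PlaceRed i B (B ++ [mkBin (GR i) 0 1]).

Definition blue_B1 (i : nat) (B : list Bin) : Prop :=
  exists bn, In bn B /\ lab bn = G1 i /\ (nblue bn < beta i)%nat.
Definition blue_B3 (i : nat) (B : list Bin) : Prop :=
  exists bn, In bn B /\ (lab bn = GB i \/ exists j, lab bn = GP i j)
             /\ (nblue bn < beta i)%nat.
Definition blue_B4 (i : nat) (B : list Bin) : Prop :=
  exists bn j, In bn B /\ lab bn = GR j /\ INR (gamma j) * t j <= Delta (phi i).

Inductive PlaceBlue (i : nat) : list Bin -> list Bin -> Prop :=
  | pb1 B1 B2 b r :
      phi i = O -> (b < beta i)%nat ->
      PlaceBlue i (B1 ++ mkBin (G1 i) b r :: B2) (B1 ++ mkBin (G1 i) (S b) r :: B2)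
  | pb2 B :
      phi i = O -> ~ blue_B1 i B ->
      PlaceBlue i B (B ++ [mkBin (G1 i) 1 0])
  | pb3 B1 B2 l b r :
      phi i <> O -> (l = GB i \/ exists j, l = GP i j) -> (b < beta i)%nat ->
      PlaceBlue i (B1 ++ mkBin l b r :: B2) (B1 ++ mkBin l (S b) r :: B2)
  | pb4 B1 B2 j b r :
      phi i <> O -> ~ blue_B3 i (B1 ++ mkBin (GR j) b r :: B2) ->
      INR (gamma j) * t j <= Delta (phi i) ->
      PlaceBlue i (B1 ++ mkBin (GR j) b r :: B2) (B1 ++ mkBin (GP i j) (S b) r :: B2)
  | pb5 B :
      phi i <> O -> ~ blue_B3 i B -> ~ blue_B4 i B ->
      PlaceBlue i B (B ++ [mkBin (GB i) 1 0]).

Inductive Step : State -> R -> State -> Prop :=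
  | step_nf_fit st x l :
      typ x = (k + 1)%nat -> nf_level st = Some l -> l + x <= 1 ->
      Step st x (mkState (scnt st) (ecnt st) (bins st) (Some (l + x)) (nf_count st))
  | step_nf_new st x :
      typ x = (k + 1)%nat -> (forall l, nf_level st = Some l -> 1 < l + x) ->
      Step st x (mkState (scnt st) (ecnt st) (bins st) (Some x) (S (nf_count st)))
  | step_red st x i B' :
      typ x = i -> (1 <= i <= k)%nat ->
      (ecnt st i < nfloor (alpha i * INR (S (scnt st i))))%nat ->
      PlaceRed i (bins st) B' ->
      Step st x (mkState (upd (scnt st) i (S (scnt st i)))
                         (upd (ecnt st) i (S (ecnt st i))) B' (nf_level st) (nf_count st))
  | step_blue st x i B' :
      typ x = i -> (1 <= i <= k)%nat ->
      ~ (ecnt st i < nfloor (alpha i * INR (S (scnt st i))))%nat ->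
      PlaceBlue i (bins st) B' ->
      Step st x (mkState (upd (scnt st) i (S (scnt st i)))
                         (ecnt st) B' (nf_level st) (nf_count st)).

Inductive Run : list R -> State -> Prop :=
  | run_nil : Run [] init_state
  | run_snoc L x st st' : Run L st -> Step st x st' -> Run (L ++ [x]) st'.

Definition nbins (st : State) : nat := (length (bins st) + nf_count st)%nat.

End Params.

From Stdlib Require Import Reals List Lra Lia Arith ZArith.
Import ListNotations.
Open Scope R_scope.

(* Of the s_i items of type i <= k, about alpha_i s_i are coloured red and the rest blue.
   Apart from one bin per type and colour, every bin of blue type-i items holds beta_i of
   them and every bin of red type-i items holds gamma_i of them, while every closed Next Fit
   bin is filled beyond 1 - eps. The weighting function W^m charges a blue (red) item of
   type i the fraction blue_share m i (red_share m i) of its bin, where the shares are 0,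
   1/2 or 1. The algorithm never keeps an (i,?) bin beside a (?,j) bin into which it could
   be merged; hence, if j0 minimises varphi over the (?,j) bins present at the end,
   W^{K+2-varphi j0} (or W^1 if there is none) gives every bin total share at least 1, so
   the number of bins exceeds sum_p W^m(p) by at most 3k + 1. *)

Lemma nfloor_bounds y : 0 <= y -> INR (nfloor y) <= y /\ y - 1 < INR (nfloor y).
Proof.
  intros Hy. unfold nfloor. destruct (base_Int_part y) as [Hlo Hhi].
  assert (Hz : (-1 < Int_part y)%Z) by (apply lt_IZR; simpl; lra).
  rewrite INR_IZR_INZ, Z2Nat.id by lia. lra.
Qed.

(* Every closed Next Fit bin is filled beyond [1 - e], since it was closed by an item of size at most [e]. *)
Definition nf_invariant (e mass : R) (level : option R) (count : nat) : Prop :=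
  0 <= mass /\
  match level with
  | None => count = 0%nat
  | Some l => 0 <= l /\ (1 <= count)%nat /\ INR (count - 1) * (1 - e) + l <= mass
  end.

Lemma nf_invariant_init e : nf_invariant e 0 None 0.
Proof. split; [lra | reflexivity]. Qed.

Lemma nf_invariant_fit e mass l count x : 0 < x -> l + x <= 1 ->
  nf_invariant e mass (Some l) count -> nf_invariant e (mass + x) (Some (l + x)) count.
Proof. intros Hx Hfit [Hm [Hl [Hc Hmass]]]. repeat split; lra || lia. Qed.

Lemma nf_invariant_open e mass level count x : 0 < x <= e -> e < 1 ->
  (forall l, level = Some l -> 1 < l + x) ->
  nf_invariant e mass level count -> nf_invariant e (mass + x) (Some x) (S count).
Proof.
  intros Hx He Hnofit [Hm Hlevel]. split; [lra|]. split; [lra|]. split; [lia|].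
  destruct level as [l|].
  - specialize (Hnofit l eq_refl). destruct Hlevel as [Hl [Hc Hmass]].
    replace (S count - 1)%nat with (S (count - 1)) by lia. rewrite S_INR. nra.
  - rewrite Hlevel. simpl. lra.
Qed.

Lemma nf_count_bound e mass level count : e < 1 ->
  nf_invariant e mass level count -> INR count <= mass / (1 - e) + 1.
Proof.
  intros He [Hm Hlevel].
  assert (Hq : 0 <= mass / (1 - e)) by (apply Rle_mult_inv_pos; lra).
  destruct level as [l|]; [|rewrite Hlevel; simpl; lra].
  destruct Hlevel as [Hl [Hc Hmass]].
  assert (INR (count - 1) <= mass / (1 - e)).
  { apply Rmult_le_reg_r with (1 - e); [lra|].
    unfold Rdiv. rewrite Rmult_assoc, Rinv_l, Rmult_1_r by lra. lra. }
  replace count with (S (count - 1)) by lia. rewrite S_INR. lra.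
Qed.

Lemma red_counter_bounds a s e : 0 <= a <= 1 -> INR e <= a * INR s < INR e + 1 ->
  (e < nfloor (a * INR (S s)))%nat -> INR (S e) <= a * INR (S s) < INR (S e) + 1.
Proof.
  intros Ha He Hlt. apply le_INR in Hlt.
  assert (Hpos : 0 <= a * INR (S s)) by (apply Rmult_le_pos; [lra | apply pos_INR]).
  destruct (nfloor_bounds _ Hpos) as [Hfl _]. rewrite !S_INR in *. lra.
Qed.

Lemma blue_counter_bounds a s e : 0 <= a -> INR e <= a * INR s < INR e + 1 ->
  ~ (e < nfloor (a * INR (S s)))%nat -> INR e <= a * INR (S s) < INR e + 1.
Proof.
  intros Ha He Hge. apply Nat.nlt_ge, le_INR in Hge.
  assert (Hpos : 0 <= a * INR (S s)) by (apply Rmult_le_pos; [lra | apply pos_INR]).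
  destruct (nfloor_bounds _ Hpos) as [_ Hfl]. rewrite !S_INR in *. lra.
Qed.

Definition sumR (f : nat -> R) (l : list nat) : R := fold_right (fun i acc => f i + acc) 0 l.

Lemma sumR_plus f g l : sumR (fun i => f i + g i) l = sumR f l + sumR g l.
Proof. induction l; simpl; lra. Qed.

Lemma sumR_ext f g l : (forall i, In i l -> f i = g i) -> sumR f l = sumR g l.
Proof. induction l as [|a l IH]; simpl; intros H; [reflexivity|]. rewrite H, IH; auto. Qed.

Lemma sumR_le f g l : (forall i, In i l -> f i <= g i) -> sumR f l <= sumR g l.
Proof.
  induction l as [|a l IH]; simpl; intros H; [lra|].
  pose proof (H a (or_introl eq_refl)). pose proof (IH (fun i Hi => H i (or_intror Hi))). lra.
Qed.

Lemma sumR_const c l : sumR (fun _ => c) l = c * INR (length l).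
Proof. induction l as [|a l IH]; simpl length; [simpl; lra|]. rewrite S_INR. simpl. rewrite IH. lra. Qed.

Lemma sumR_indicator f j a n : (a <= j < a + n)%nat ->
  sumR (fun i => if j =? i then f i else 0) (seq a n) = f j.
Proof.
  revert a; induction n as [|n IH]; intros a Hj; [lia|]. simpl.
  destruct (Nat.eqb_spec j a) as [->|Hne]; [|rewrite IH by lia; lra].
  rewrite (sumR_ext _ (fun _ => 0)), sumR_const; [lra|].
  intros i Hi. apply in_seq in Hi. destruct (Nat.eqb_spec a i); [lia | reflexivity].
Qed.

Section SuperHarmonic.
Variable P : SHParams.
Hypothesis HA : admissible P.
Local Notation k := (sh_k P).
Local Notation t := (sh_t P).
Local Notation alpha := (sh_alpha P).
Local Notation K := (sh_K P).
Local Notation Delta := (sh_Delta P).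
Local Notation phi := (sh_phi P).

Lemma k_pos : (1 <= k)%nat. Proof. apply HA. Qed.
Lemma t_one : t 1 = 1. Proof. apply HA. Qed.
Lemma t_step i : (1 <= i <= k)%nat -> t (i + 1) < t i. Proof. apply HA. Qed.
Lemma eps_pos : 0 < eps P. Proof. apply HA. Qed.
Lemma t_last : t (k + 2) = 0. Proof. apply HA. Qed.
Lemma alpha_range i : (1 <= i <= k)%nat -> 0 <= alpha i <= 1. Proof. apply HA. Qed.
Lemma Delta_0 : Delta 0 = 0. Proof. apply HA. Qed.
Lemma Delta_step j : (j < K)%nat -> Delta j < Delta (j + 1). Proof. apply HA. Qed.
Lemma phi_range i : (1 <= i <= k)%nat -> (phi i <= K)%nat. Proof. apply HA. Qed.
Lemma alpha_large_type i : (1 <= i <= k)%nat -> Delta K < t i -> alpha i = 0.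
Proof. apply HA. Qed.

Lemma t_antitone i j : (1 <= i <= j)%nat -> (j <= k + 1)%nat -> t j <= t i.
Proof.
  intros Hij Hj. induction j as [|j IH]; [lia|].
  destruct (Nat.eq_dec i (S j)) as [->|Hne]; [lra|].
  pose proof (t_step j ltac:(lia)). rewrite Nat.add_1_r in *.
  specialize (IH ltac:(lia) ltac:(lia)). lra.
Qed.

Lemma t_pos i : (1 <= i <= k + 1)%nat -> 0 < t i.
Proof. intros Hi. pose proof (t_antitone i (k + 1) Hi (le_n _)). pose proof eps_pos. unfold eps in *. lra. Qed.

Lemma t_le_1 i : (1 <= i <= k + 1)%nat -> t i <= 1.
Proof. intros Hi. rewrite <- t_one. apply t_antitone; lia. Qed.

Lemma eps_lt_1 : eps P < 1.
Proof.
  pose proof k_pos. pose proof (t_step 1 ltac:(lia)). rewrite t_one in *.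
  pose proof (t_antitone 2 (k + 1) ltac:(lia) (le_n _)). unfold eps. simpl in *. lra.
Qed.

Lemma first_type_spec x n i : x <= t i -> t (i + n) < x ->
  (i <= first_type P x n i < i + n)%nat /\
  t (first_type P x n i + 1) < x <= t (first_type P x n i).
Proof.
  revert i; induction n as [|n IH]; intros i Hle Hlt; simpl.
  - rewrite Nat.add_0_r in Hlt. lra.
  - destruct (Rlt_dec (t (i + 1)) x) as [Hnext|Hnext].
    + destruct (Rle_dec x (t i)); [split; [lia | lra] | lra].
    + rewrite Nat.add_succ_r, <- Nat.add_succ_l in Hlt. rewrite Nat.add_1_r in Hnext.
      destruct (IH (S i) ltac:(lra) Hlt). split; [lia | assumption].
Qed.

Lemma typ_spec x : 0 < x <= 1 ->
  (1 <= typ P x <= k + 1)%nat /\ t (typ P x + 1) < x <= t (typ P x).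
Proof.
  intros Hx. destruct (first_type_spec x (k + 1) 1) as [Hrange Hx'].
  - rewrite t_one; lra.
  - replace (1 + (k + 1))%nat with (k + 2)%nat by lia. rewrite t_last; lra.
  - split; [unfold typ; lia | exact Hx'].
Qed.

Lemma Delta_monotone a b : (a <= b <= K)%nat -> Delta a <= Delta b.
Proof.
  intros [Hab HbK]. induction b as [|b IH].
  - replace a with 0%nat by lia. lra.
  - destruct (Nat.eq_dec a (S b)) as [->|Hne]; [lra|].
    pose proof (Delta_step b ltac:(lia)). rewrite Nat.add_1_r in *.
    specialize (IH ltac:(lia) ltac:(lia)). lra.
Qed.

Lemma first_Delta_spec x n j : (1 <= j)%nat -> (1 <= n)%nat -> x <= Delta (j + n - 1) ->
  (j <= first_Delta P x n j < j + n)%nat /\ x <= Delta (first_Delta P x n j).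
Proof.
  revert j; induction n as [|n IH]; intros j Hj Hn Hx; simpl; [lia|].
  destruct (Rle_dec x (Delta j)); [split; [lia | assumption]|].
  destruct n as [|n]; [rewrite Nat.add_sub in Hx; contradiction|].
  destruct (IH (S j)) as [Hr Hle]; [lia | lia | now replace (S j + S n - 1)%nat with (j + S (S n) - 1)%nat by lia|].
  split; [lia | exact Hle].
Qed.

Lemma varphi_spec j : (1 <= j <= k)%nat -> ~ Delta K < t j ->
  (1 <= varphi P j <= K)%nat /\ t j <= Delta (varphi P j).
Proof.
  intros Hj Hsmall. unfold varphi. destruct (Rlt_dec (Delta K) (t j)) as [|HtK]; [contradiction|].
  assert (HK : (1 <= K)%nat).
  { destruct (Nat.eq_dec K 0) as [E|E]; [|lia]. rewrite E, Delta_0 in HtK.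
    pose proof (t_pos j ltac:(lia)). lra. }
  destruct (first_Delta_spec (t j) K 1) as [Hr Hle]; [lia | lia | now replace (1 + K - 1)%nat with K by lia; lra|].
  split; [lia | exact Hle].
Qed.

Lemma gamma_pos j : ~ Delta K < t j -> (1 <= gamma P j)%nat.
Proof. intros H. unfold gamma. destruct (Rlt_dec (Delta K) (t j)); [contradiction | lia]. Qed.

Lemma beta_pos i : (1 <= i <= k)%nat -> (1 <= beta P i)%nat.
Proof.
  intros Hi. unfold beta. pose proof (t_pos i ltac:(lia)). pose proof (t_le_1 i ltac:(lia)).
  assert (1 <= / t i) by (rewrite <- Rinv_1; apply Rinv_le_contravar; lra).
  destruct (nfloor_bounds (/ t i) ltac:(lra)) as [_ Hlt].
  destruct (nfloor (/ t i)); [simpl in Hlt; lra | lia].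
Qed.

(* gamma_j t_j <= Delta_1 when gamma_j > 1, and gamma_j t_j = t_j <= Delta_{varphi j} otherwise;
   either way the red items of a (?,j) bin fit into the gap Delta_m of any m >= varphi j. *)
Lemma gamma_fits j m : (1 <= j <= k)%nat -> ~ Delta K < t j ->
  (varphi P j <= m <= K)%nat -> INR (gamma P j) * t j <= Delta m.
Proof.
  intros Hj Hsmall Hm. destruct (varphi_spec j Hj Hsmall) as [Hv Htj].
  pose proof (Delta_monotone (varphi P j) m ltac:(lia)).
  pose proof (Delta_monotone 1 (varphi P j) ltac:(lia)).
  pose proof (t_pos j ltac:(lia)).
  pose proof (Delta_step 0 ltac:(lia)). rewrite Delta_0 in *. simpl in *.
  unfold gamma. destruct (Rlt_dec (Delta K) (t j)); [contradiction|].
  assert (Hq : 0 <= Delta 1 / t j) by (apply Rle_mult_inv_pos; lra).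
  destruct (nfloor_bounds _ Hq) as [Hfl _].
  destruct (nfloor (Delta 1 / t j)) as [|q]; [simpl; lra|].
  replace (Nat.max 1 (S q)) with (S q) by lia.
  apply Rmult_le_compat_r with (r := t j) in Hfl; [|lra].
  unfold Rdiv in Hfl. rewrite Rmult_assoc, Rinv_l, Rmult_1_r in Hfl by lra. lra.
Qed.

(** * Bins and the invariant of the algorithm *)

Definition has_blue_label (i : nat) (b : Bin) : bool :=
  match lab b with G1 i' | GB i' | GP i' _ => i' =? i | GR _ => false end.
Definition has_red_label (i : nat) (b : Bin) : bool :=
  match lab b with GR j | GP _ j => j =? i | _ => false end.

Definition blue_bins (i : nat) (B : list Bin) : nat :=
  list_sum (map (fun b => if has_blue_label i b then 1 else 0)%nat B).
Definition blue_items (i : nat) (B : list Bin) : nat :=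
  list_sum (map (fun b => if has_blue_label i b then nblue b else 0)%nat B).
Definition red_bins (i : nat) (B : list Bin) : nat :=
  list_sum (map (fun b => if has_red_label i b then 1 else 0)%nat B).
Definition red_items (i : nat) (B : list Bin) : nat :=
  list_sum (map (fun b => if has_red_label i b then nred b else 0)%nat B).

Lemma count_mul_le_sum (p : Bin -> bool) (g : Bin -> nat) c B :
  (forall b, In b B -> p b = true -> (c <= g b)%nat) ->
  (c * list_sum (map (fun b => if p b then 1 else 0) B)
     <= list_sum (map (fun b => if p b then g b else 0) B))%nat.
Proof.
  induction B as [|b B IH]; simpl; intros Hc; [lia|].
  specialize (IH (fun b' Hb' => Hc b' (or_intror Hb'))).
  destruct (p b) eqn:Hp; [pose proof (Hc b (or_introl eq_refl) Hp); nia | lia].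
Qed.

Definition well_labelled (b : Bin) : Prop :=
  match lab b with
  | G1 i => phi i = 0%nat /\ (1 <= i <= k)%nat
  | GB i => phi i <> 0%nat /\ (1 <= i <= k)%nat /\ nred b = 0%nat
  | GR j => (1 <= j <= k)%nat /\ ~ Delta K < t j /\ nblue b = 0%nat
  | GP i j => phi i <> 0%nat /\ (1 <= i <= k)%nat /\ (1 <= j <= k)%nat /\ ~ Delta K < t j
  end.

Definition unmergeable (B : list Bin) : Prop :=
  forall i j, In (GB i) (map lab B) -> In (GR j) (map lab B) ->
    ~ INR (gamma P j) * t j <= Delta (phi i).

(* Each type has at most one non-full bin of each colour. *)
Definition nearly_full (B : list Bin) : Prop :=
  forall i, (beta P i * blue_bins i B <= blue_items i B + beta P i)%nat /\
            (gamma P i * red_bins i B <= red_items i B + gamma P i)%nat.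

Lemma In_lab_replace l B1 b b' B2 : In l (map lab (B1 ++ b' :: B2)) ->
  l = lab b' \/ In l (map lab (B1 ++ b :: B2)).
Proof. rewrite !map_app, !in_app_iff. simpl. intros [H|[<-|H]]; auto. Qed.

Lemma In_lab_snoc l B b : In l (map lab (B ++ [b])) -> l = lab b \/ In l (map lab B).
Proof. rewrite map_app, in_app_iff. simpl. intros [H|[<-|[]]]; auto. Qed.

Lemma Forall_middle (Q : Bin -> Prop) B1 b B2 : Forall Q (B1 ++ b :: B2) -> Q b.
Proof. rewrite Forall_app. intros [_ H]. now inversion H. Qed.

Lemma Forall_replace (Q : Bin -> Prop) B1 b b' B2 :
  Forall Q (B1 ++ b :: B2) -> (Q b -> Q b') -> Forall Q (B1 ++ b' :: B2).
Proof. rewrite !Forall_app. intros [H1 H2] Hb'. inversion H2; subst. auto. Qed.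

Lemma Forall_snoc (Q : Bin -> Prop) B b : Forall Q B -> Q b -> Forall Q (B ++ [b]).
Proof. intros. apply Forall_app. auto. Qed.

Lemma unmergeable_relabel B1 b b' B2 : lab b' = lab b \/ (exists i j, lab b' = GP i j) ->
  unmergeable (B1 ++ b :: B2) -> unmergeable (B1 ++ b' :: B2).
Proof.
  intros Hlab H i j Hi Hj.
  destruct (In_lab_replace _ _ b _ _ Hi) as [Ei|Hi'];
  destruct (In_lab_replace _ _ b _ _ Hj) as [Ej|Hj'];
  try (destruct Hlab as [Hlab|[? [? Hlab]]]; rewrite Hlab in *; try discriminate);
  apply H; auto; rewrite map_app, in_app_iff; simpl; auto.
Qed.

Lemma red_bins_full i B : ~ red_R1 P i B -> ~ red_R2 P i B ->
  (gamma P i * red_bins i B <= red_items i B)%nat.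
Proof.
  intros H1 H2. apply count_mul_le_sum. intros b Hb E. unfold has_red_label in E.
  apply Nat.nlt_ge. intros Hroom.
  destruct (lab b) as [a|a|a|a c] eqn:El; try discriminate; apply Nat.eqb_eq in E; subst.
  - apply H1. now exists b.
  - apply H2. now exists b, a.
Qed.

Lemma blue_bins_full_plain i B : Forall well_labelled B -> phi i = 0%nat -> ~ blue_B1 P i B ->
  (beta P i * blue_bins i B <= blue_items i B)%nat.
Proof.
  intros HG Hp H1. apply count_mul_le_sum. intros b Hb E. unfold has_blue_label in E.
  rewrite Forall_forall in HG. specialize (HG b Hb). unfold well_labelled in HG.
  apply Nat.nlt_ge. intros Hroom.
  destruct (lab b) as [a|a|a|a c] eqn:El; try discriminate; apply Nat.eqb_eq in E; subst; try tauto.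
  apply H1. now exists b.
Qed.

Lemma blue_bins_full_paired i B : Forall well_labelled B -> phi i <> 0%nat -> ~ blue_B3 P i B ->
  (beta P i * blue_bins i B <= blue_items i B)%nat.
Proof.
  intros HG Hp H3. apply count_mul_le_sum. intros b Hb E. unfold has_blue_label in E.
  rewrite Forall_forall in HG. specialize (HG b Hb). unfold well_labelled in HG.
  apply Nat.nlt_ge. intros Hroom.
  destruct (lab b) as [a|a|a|a c] eqn:El; try discriminate; apply Nat.eqb_eq in E; subst; try tauto;
  apply H3; exists b; eauto.
Qed.

Ltac split_eqb := repeat match goal with
  | |- context [Nat.eqb ?a ?b] => destruct (Nat.eqb_spec a b); try subst a
  | H : context [Nat.eqb ?a ?b] |- _ => destruct (Nat.eqb_spec a b); try subst a end.

Ltac count_cases HJ :=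
  let i' := fresh "i" in
  intro i'; try destruct (HJ i');
  unfold blue_bins, blue_items, red_bins, red_items, has_blue_label, has_red_label in *;
  rewrite ?map_app, ?list_sum_app in *; simpl in *; split_eqb; try tauto; lia.

Lemma place_red_spec i B B' : (1 <= i <= k)%nat -> ~ Delta K < t i ->
  Forall well_labelled B -> unmergeable B -> nearly_full B -> PlaceRed P i B B' ->
  Forall well_labelled B' /\ unmergeable B' /\ nearly_full B' /\
  (forall i', blue_items i' B' = blue_items i' B) /\
  (forall i', red_items i' B' = (red_items i' B + (if i =? i' then 1 else 0))%nat).
Proof.
  intros Hi Hsmall HG HC HJ HP.
  destruct HP as [B1 B2 b r Hr|B1 B2 j b r H1 Hr|B1 B2 j b r H1 H2 Hfit|B H1 H2 H3].
  - pose proof (Forall_middle _ _ _ _ HG) as Hb. unfold well_labelled in Hb; simpl in Hb.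
    split; [apply (Forall_replace _ _ _ _ _ HG); unfold well_labelled; simpl; tauto|].
    split; [refine (unmergeable_relabel _ _ _ _ _ HC); left; reflexivity|].
    split; [|split]; count_cases HJ.
  - pose proof (Forall_middle _ _ _ _ HG) as Hb. unfold well_labelled in Hb; simpl in Hb.
    split; [apply (Forall_replace _ _ _ _ _ HG); unfold well_labelled; simpl; tauto|].
    split; [refine (unmergeable_relabel _ _ _ _ _ HC); left; reflexivity|].
    split; [|split]; count_cases HJ.
  - pose proof (Forall_middle _ _ _ _ HG) as Hb. unfold well_labelled in Hb; simpl in Hb.
    pose proof (red_bins_full i _ H1 H2) as Hfull.
    split; [apply (Forall_replace _ _ _ _ _ HG); unfold well_labelled; simpl; tauto|].
    split; [refine (unmergeable_relabel _ _ _ _ _ HC); right; do 2 eexists; reflexivity|].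
    split; [|split]; count_cases HJ.
  - pose proof (red_bins_full i _ H1 H2) as Hfull.
    split; [apply Forall_snoc; [exact HG | unfold well_labelled; simpl; tauto]|].
    split.
    { intros i' j' Hi' Hj'.
      destruct (In_lab_snoc _ _ _ Hi') as [E|Hi'']; [discriminate|].
      destruct (In_lab_snoc _ _ _ Hj') as [E|Hj'']; [|auto].
      injection E as <-. intros Hfit. apply H3.
      apply in_map_iff in Hi''. destruct Hi'' as [bn [E Hbn]]. now exists bn, i'. }
    split; [|split]; count_cases HJ.
Qed.

Lemma place_blue_spec i B B' : (1 <= i <= k)%nat ->
  Forall well_labelled B -> unmergeable B -> nearly_full B -> PlaceBlue P i B B' ->
  Forall well_labelled B' /\ unmergeable B' /\ nearly_full B' /\
  (forall i', blue_items i' B' = (blue_items i' B + (if i =? i' then 1 else 0))%nat) /\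
  (forall i', red_items i' B' = red_items i' B).
Proof.
  intros Hi HG HC HJ HP.
  destruct HP as [B1 B2 b r Hp Hb|B Hp H1|B1 B2 l b r Hp Hl Hb|B1 B2 j b r Hp H3 Hfit|B Hp H3 H4].
  - pose proof (Forall_middle _ _ _ _ HG) as Hg. unfold well_labelled in Hg; simpl in Hg.
    split; [apply (Forall_replace _ _ _ _ _ HG); unfold well_labelled; simpl; tauto|].
    split; [refine (unmergeable_relabel _ _ _ _ _ HC); left; reflexivity|].
    split; [|split]; count_cases HJ.
  - pose proof (blue_bins_full_plain i _ HG Hp H1) as Hfull.
    split; [apply Forall_snoc; [exact HG | unfold well_labelled; simpl; tauto]|].
    split.
    { intros i' j' Hi' Hj'.
      destruct (In_lab_snoc _ _ _ Hi') as [E|Hi'']; [discriminate|].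
      destruct (In_lab_snoc _ _ _ Hj') as [E|Hj'']; [discriminate | auto]. }
    split; [|split]; count_cases HJ.
  - destruct Hl as [->|[j ->]];
      pose proof (Forall_middle _ _ _ _ HG) as Hg; unfold well_labelled in Hg; simpl in Hg;
      (split; [apply (Forall_replace _ _ _ _ _ HG); unfold well_labelled; simpl; tauto|]);
      (split; [refine (unmergeable_relabel _ _ _ _ _ HC); left; reflexivity|]);
      (split; [|split]); count_cases HJ.
  - pose proof (Forall_middle _ _ _ _ HG) as Hg. unfold well_labelled in Hg; simpl in Hg.
    pose proof (blue_bins_full_paired i _ HG Hp H3) as Hfull.
    split; [apply (Forall_replace _ _ _ _ _ HG); unfold well_labelled; simpl; tauto|].
    split; [refine (unmergeable_relabel _ _ _ _ _ HC); right; do 2 eexists; reflexivity|].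
    split; [|split]; count_cases HJ.
  - pose proof (blue_bins_full_paired i _ HG Hp H3) as Hfull.
    split; [apply Forall_snoc; [exact HG | unfold well_labelled; simpl; tauto]|].
    split.
    { intros i' j' Hi' Hj'.
      destruct (In_lab_snoc _ _ _ Hj') as [E|Hj'']; [discriminate|].
      destruct (In_lab_snoc _ _ _ Hi') as [E|Hi'']; [|auto].
      injection E as <-. intros Hfit. apply H4.
      apply in_map_iff in Hj''. destruct Hj'' as [bn [E Hbn]]. now exists bn, j'. }
    split; [|split]; count_cases HJ.
Qed.

Definition type_count (i : nat) (L : list R) : nat := count_occ Nat.eq_dec (map (typ P) L) i.

Definition small_mass (L : list R) : R :=
  fold_right (fun x acc => (if typ P x =? k + 1 then x else 0) + acc) 0 L.

Lemma type_count_snoc i L x :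
  type_count i (L ++ [x]) = (type_count i L + if Nat.eq_dec (typ P x) i then 1 else 0)%nat.
Proof. unfold type_count. rewrite map_app, count_occ_app. reflexivity. Qed.

Lemma small_mass_snoc L x :
  small_mass (L ++ [x]) = small_mass L + if typ P x =? k + 1 then x else 0.
Proof. unfold small_mass. rewrite fold_right_app. simpl. induction L; simpl; lra. Qed.

Record invariant (L : list R) (st : State) : Prop := {
  inv_labels : Forall well_labelled (bins st);
  inv_unmergeable : unmergeable (bins st);
  inv_nearly_full : nearly_full (bins st);
  inv_blue_items : forall i, (blue_items i (bins st) + ecnt st i)%nat = scnt st i;
  inv_red_items : forall i, red_items i (bins st) = ecnt st i;
  inv_scnt : forall i, (1 <= i <= k)%nat -> scnt st i = type_count i L;
  inv_ecnt : forall i, (1 <= i <= k)%nat ->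
    INR (ecnt st i) <= alpha i * INR (scnt st i) < INR (ecnt st i) + 1;
  inv_nf : nf_invariant (eps P) (small_mass L) (nf_level st) (nf_count st)
}.

Lemma invariant_init : invariant [] init_state.
Proof.
  constructor; simpl.
  - constructor.
  - intros i j [].
  - intros i. unfold blue_bins, blue_items, red_bins, red_items. simpl. lia.
  - reflexivity.
  - reflexivity.
  - reflexivity.
  - intros i _. simpl. lra.
  - apply nf_invariant_init.
Qed.

Lemma step_small_invariant L st x st' : invariant L st -> 0 < x <= 1 ->
  typ P x = (k + 1)%nat -> Step P st x st' -> invariant (L ++ [x]) st'.
Proof.
  intros [HG HC HJ Hblue Hred Hs He Hnf] Hx Hty HS.
  destruct (typ_spec x Hx) as [_ [_ Hxeps]]. rewrite Hty in Hxeps.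
  assert (Hcount : forall i, (1 <= i <= k)%nat -> scnt st i = type_count i (L ++ [x])).
  { intros i Hi. rewrite type_count_snoc, <- Hs by exact Hi.
    destruct (Nat.eq_dec (typ P x) i); lia. }
  assert (Hmass : small_mass (L ++ [x]) = small_mass L + x)
    by (rewrite small_mass_snoc, Hty, Nat.eqb_refl; reflexivity).
  destruct HS as [st0 x0 l _ Hl Hfit|st0 x0 _ Hnofit|st0 x0 i B' Hi Hik _ _|st0 x0 i B' Hi Hik _ _];
    try lia.
  - rewrite Hl in Hnf. constructor; auto. rewrite Hmass. now apply nf_invariant_fit.
  - constructor; auto. rewrite Hmass.
    apply nf_invariant_open with (nf_level st0); auto using eps_lt_1. unfold eps. lra.
Qed.

Lemma step_red_invariant L st x i B' : invariant L st -> typ P x = i -> (1 <= i <= k)%nat ->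
  (ecnt st i < nfloor (alpha i * INR (S (scnt st i))))%nat -> PlaceRed P i (bins st) B' ->
  invariant (L ++ [x]) (mkState (upd (scnt st) i (S (scnt st i)))
                                (upd (ecnt st) i (S (ecnt st i))) B' (nf_level st) (nf_count st)).
Proof.
  intros [HG HC HJ Hblue Hred Hs He Hnf] Hty Hi Hnew HP.
  assert (Hsmall : ~ Delta K < t i).
  { intros Hlarge. rewrite (alpha_large_type i Hi Hlarge), Rmult_0_l in Hnew.
    destruct (nfloor_bounds 0 (Rle_refl 0)) as [H0 _].
    apply lt_INR in Hnew. pose proof (pos_INR (ecnt st i)). lra. }
  destruct (place_red_spec i _ _ Hi Hsmall HG HC HJ HP) as [HG' [HC' [HJ' [Hb' Hr']]]].
  constructor; simpl; auto; unfold upd.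
  - intros i'. rewrite Hb'. pose proof (Hblue i'). destruct (Nat.eqb_spec i' i); subst; lia.
  - intros i'. rewrite Hr', Hred. destruct (Nat.eqb_spec i' i), (Nat.eqb_spec i i'); subst; lia.
  - intros i' Hi'. rewrite type_count_snoc, <- Hs by exact Hi'.
    destruct (Nat.eqb_spec i' i), (Nat.eq_dec (typ P x) i'); subst; lia.
  - intros i' Hi'. destruct (Nat.eqb_spec i' i) as [->|]; [|now apply He].
    apply red_counter_bounds; auto using alpha_range.
  - rewrite small_mass_snoc, Hty. replace (i =? k + 1) with false by (symmetry; apply Nat.eqb_neq; lia).
    now rewrite Rplus_0_r.
Qed.

Lemma step_blue_invariant L st x i B' : invariant L st -> typ P x = i -> (1 <= i <= k)%nat ->
  ~ (ecnt st i < nfloor (alpha i * INR (S (scnt st i))))%nat -> PlaceBlue P i (bins st) B' ->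
  invariant (L ++ [x]) (mkState (upd (scnt st) i (S (scnt st i)))
                                (ecnt st) B' (nf_level st) (nf_count st)).
Proof.
  intros [HG HC HJ Hblue Hred Hs He Hnf] Hty Hi Hold HP.
  destruct (place_blue_spec i _ _ Hi HG HC HJ HP) as [HG' [HC' [HJ' [Hb' Hr']]]].
  constructor; simpl; auto; unfold upd.
  - intros i'. rewrite Hb'. pose proof (Hblue i').
    destruct (Nat.eqb_spec i' i), (Nat.eqb_spec i i'); subst; lia.
  - intros i'. now rewrite Hr'.
  - intros i' Hi'. rewrite type_count_snoc, <- Hs by exact Hi'.
    destruct (Nat.eqb_spec i' i), (Nat.eq_dec (typ P x) i'); subst; lia.
  - intros i' Hi'. destruct (Nat.eqb_spec i' i) as [->|]; [|now apply He].
    apply blue_counter_bounds; auto. apply alpha_range, Hi.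
  - rewrite small_mass_snoc, Hty. replace (i =? k + 1) with false by (symmetry; apply Nat.eqb_neq; lia).
    now rewrite Rplus_0_r.
Qed.

Lemma run_invariant L st : Forall (fun x => 0 < x <= 1) L -> Run P L st -> invariant L st.
Proof.
  intros Hsizes HR. induction HR as [|L x st st' HR IH HS]; [exact invariant_init|].
  apply Forall_app in Hsizes. destruct Hsizes as [HL Hx]. inversion Hx as [|? ? Hx1]; subst.
  specialize (IH HL).
  destruct (Nat.eq_dec (typ P x) (k + 1)) as [Hsmall|Hsmall].
  - exact (step_small_invariant L st x st' IH Hx1 Hsmall HS).
  - destruct HS as [st0 x0 l Hty|st0 x0 Hty|st0 x0 i B' Hty Hi Hnew HP|st0 x0 i B' Hty Hi Hold HP];
      try contradiction.
    + exact (step_red_invariant L st0 x0 i B' IH Hty Hi Hnew HP).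
    + exact (step_blue_invariant L st0 x0 i B' IH Hty Hi Hold HP).
Qed.

(** * Weighting functions *)

Definition blue_share (m i : nat) : R :=
  if m =? 1 then 1 else if m =? K + 1 then (if phi i =? 0 then 1 else 0)
  else if phi i <? K + 2 - m then 1 else / 2.
Definition red_share (m i : nat) : R :=
  if m =? 1 then 0 else if m =? K + 1 then (if varphi P i =? 0 then 0 else 1)
  else if varphi P i <? K + 2 - m then / 2 else 1.
Definition item_weight (m i : nat) : R :=
  blue_share m i * ((1 - alpha i) / INR (beta P i)) + red_share m i * rdiv (alpha i) (gamma P i).

Lemma blue_share_range m i : 0 <= blue_share m i <= 1.
Proof.
  unfold blue_share. destruct (m =? 1); [lra|]. destruct (m =? K + 1).
  - destruct (phi i =? 0); lra.
  - destruct (phi i <? K + 2 - m); lra.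
Qed.

Lemma red_share_range m i : 0 <= red_share m i <= 1.
Proof.
  unfold red_share. destruct (m =? 1); [lra|]. destruct (m =? K + 1).
  - destruct (varphi P i =? 0); lra.
  - destruct (varphi P i <? K + 2 - m); lra.
Qed.

Lemma rdiv_double a g : rdiv a (2 * g) = / 2 * rdiv a g.
Proof.
  unfold rdiv. destruct (Nat.eqb_spec g 0) as [->|Hg]; [simpl; lra|].
  replace (2 * g =? 0)%nat with false by (symmetry; apply Nat.eqb_neq; lia).
  rewrite mult_INR. assert (INR g <> 0) by (apply not_0_INR; auto). simpl. field. auto.
Qed.

Lemma W_item_weight m x : (1 <= typ P x <= k)%nat -> W P m x = item_weight m (typ P x).
Proof.
  intros Hx. pose proof (beta_pos (typ P x) Hx) as Hb. unfold W, item_weight, blue_share, red_share.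
  cbv zeta. replace (k + 1 <=? typ P x)%nat with false by (symmetry; apply Nat.leb_gt; lia).
  generalize dependent (typ P x). intros i Hi Hb.
  assert (INR (beta P i) <> 0) by (apply not_0_INR; lia).
  rewrite !rdiv_double.
  replace ((1 - alpha i) / (2 * INR (beta P i))) with (/ 2 * ((1 - alpha i) / INR (beta P i)))
    by (field; auto).
  destruct (m =? 1); [lra|]. destruct (m =? K + 1).
  - destruct (phi i =? 0), (varphi P i =? 0); lra.
  - destruct (phi i <? K + 2 - m), (varphi P i <? K + 2 - m) eqn:Hlt, (K + 2 - m <=? varphi P i) eqn:Hle;
      try (apply Nat.ltb_lt in Hlt; apply Nat.leb_le in Hle; lia);
      try (apply Nat.ltb_ge in Hlt; apply Nat.leb_gt in Hle; lia); lra.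
Qed.

Lemma W_small m x : typ P x = (k + 1)%nat -> W P m x = x / (1 - eps P).
Proof. intros Hx. unfold W. cbv zeta. now rewrite Hx, Nat.leb_refl. Qed.

Lemma sumW_by_types m L : Forall (fun x => 0 < x <= 1) L ->
  sumW P m L = sumR (fun i => INR (type_count i L) * item_weight m i) (seq 1 k)
               + small_mass L / (1 - eps P).
Proof.
  induction L as [|x L IH]; intros Hsizes.
  - simpl. rewrite (sumR_ext _ (fun _ => 0)), sumR_const by (intros; simpl; lra). unfold Rdiv. lra.
  - inversion Hsizes as [|? ? Hx HL]; subst. specialize (IH HL).
    unfold sumW in *. simpl fold_right. rewrite IH.
    rewrite (sumR_ext (fun i => INR (type_count i (x :: L)) * item_weight m i)
                      (fun i => (if typ P x =? i then item_weight m i else 0)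
                                 + INR (type_count i L) * item_weight m i)).
    2:{ intros i _. unfold type_count. cbn [map]. destruct (Nat.eqb_spec (typ P x) i) as [<-|Hne].
        - rewrite count_occ_cons_eq, S_INR by reflexivity. lra.
        - rewrite count_occ_cons_neq by exact Hne. lra. }
    rewrite sumR_plus. unfold small_mass. simpl fold_right. fold (small_mass L).
    destruct (typ_spec x Hx) as [Hrange _].
    destruct (Nat.eq_dec (typ P x) (k + 1)) as [E|E].
    + rewrite (sumR_ext (fun i => if typ P x =? i then _ else 0) (fun _ => 0)), sumR_const.
      * rewrite W_small, E, Nat.eqb_refl by exact E. unfold Rdiv. lra.
      * intros i Hi. apply in_seq in Hi. destruct (Nat.eqb_spec (typ P x) i); [lia | reflexivity].
    + rewrite sumR_indicator, W_item_weight by lia.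
      replace (typ P x =? k + 1) with false by (symmetry; apply Nat.eqb_neq; auto). unfold Rdiv. lra.
Qed.

(** * Covering the bins *)

Definition bin_share (m : nat) (b : Bin) : R :=
  match lab b with
  | G1 i | GB i => blue_share m i
  | GR j => red_share m j
  | GP i j => blue_share m i + red_share m j
  end.

Definition total_share (m : nat) (B : list Bin) : R :=
  fold_right (fun b acc => bin_share m b + acc) 0 B.

Lemma bin_share_by_types m b : well_labelled b ->
  sumR (fun i => blue_share m i * INR (if has_blue_label i b then 1 else 0)
               + red_share m i * INR (if has_red_label i b then 1 else 0)) (seq 1 k)
  = bin_share m b.
Proof.
  unfold bin_share, has_blue_label, has_red_label, well_labelled.
  destruct (lab b) as [a|a|a|a c]; intros Hb.
  - rewrite (sumR_ext _ (fun i => if a =? i then blue_share m i else 0))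
      by (intros i _; destruct (a =? i); simpl; lra).
    now rewrite sumR_indicator by lia.
  - rewrite (sumR_ext _ (fun i => if a =? i then blue_share m i else 0))
      by (intros i _; destruct (a =? i); simpl; lra).
    now rewrite sumR_indicator by lia.
  - rewrite (sumR_ext _ (fun i => if a =? i then red_share m i else 0))
      by (intros i _; destruct (a =? i); simpl; lra).
    now rewrite sumR_indicator by lia.
  - rewrite (sumR_ext _ (fun i => (if a =? i then blue_share m i else 0)
                                + (if c =? i then red_share m i else 0)))
      by (intros i _; destruct (a =? i), (c =? i); simpl; lra).
    now rewrite sumR_plus, !sumR_indicator by lia.
Qed.

Lemma total_share_by_types m B : Forall well_labelled B ->
  total_share m B
  = sumR (fun i => blue_share m i * INR (blue_bins i B) + red_share m i * INR (red_bins i B)) (seq 1 k).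
Proof.
  induction B as [|b B IH]; intros HG.
  - simpl. rewrite (sumR_ext _ (fun _ => 0)), sumR_const by (intros; simpl; lra). lra.
  - inversion HG as [|? ? Hb HB]; subst.
    change (total_share m (b :: B)) with (bin_share m b + total_share m B).
    rewrite (IH HB), <- (bin_share_by_types m b Hb), <- sumR_plus.
    apply sumR_ext. intros i _.
    change (blue_bins i (b :: B)) with ((if has_blue_label i b then 1 else 0) + blue_bins i B)%nat.
    change (red_bins i (b :: B)) with ((if has_red_label i b then 1 else 0) + red_bins i B)%nat.
    rewrite !plus_INR. lra.
Qed.


Lemma length_le_total_share m B : (forall b, In b B -> 1 <= bin_share m b) ->
  INR (length B) <= total_share m B.
Proof.
  induction B as [|b B IH]; intros Hcov; simpl length; [simpl; lra|].
  rewrite S_INR. change (total_share m (b :: B)) with (bin_share m b + total_share m B).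
  pose proof (Hcov b (or_introl eq_refl)). pose proof (IH (fun b' Hb' => Hcov b' (or_intror Hb'))). lra.
Qed.

Lemma min_red_label (l : list Label) : (forall j, ~ In (GR j) l) \/
  exists j0, In (GR j0) l /\ forall j, In (GR j) l -> (varphi P j0 <= varphi P j)%nat.
Proof.
  induction l as [|a l IH]; [left; intros j []|].
  destruct IH as [Hnone|[j0 [Hin Hmin]]].
  - destruct a as [i|i|j|i j];
      try (left; intros j' [E|Hj']; [discriminate | exact (Hnone j' Hj')]).
    right. exists j. split; [now left|].
    intros j' [E|Hj']; [injection E as ->; lia | destruct (Hnone j' Hj')].
  - destruct a as [i|i|j|i j];
      try (right; exists j0; split; [now right|]; intros j' [E|Hj']; [discriminate | auto]).
    destruct (Nat.le_ge_cases (varphi P j) (varphi P j0)).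
    + right. exists j. split; [now left|].
      intros j' [E|Hj']; [injection E as ->; lia | specialize (Hmin j' Hj'); lia].
    + right. exists j0. split; [now right|].
      intros j' [E|Hj']; [injection E as ->; lia | auto].
Qed.

Lemma blue_share_one v i : (1 <= v <= K)%nat -> (phi i < v)%nat -> blue_share (K + 2 - v) i = 1.
Proof.
  intros Hv Hi. unfold blue_share.
  replace (K + 2 - v =? 1) with false by (symmetry; apply Nat.eqb_neq; lia).
  destruct (Nat.eqb_spec (K + 2 - v) (K + 1)).
  - replace (phi i) with 0%nat by lia. reflexivity.
  - replace (phi i <? K + 2 - (K + 2 - v)) with true by (symmetry; apply Nat.ltb_lt; lia).
    reflexivity.
Qed.

Lemma red_share_one v j : (1 <= v <= K)%nat -> (v <= varphi P j)%nat -> red_share (K + 2 - v) j = 1.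
Proof.
  intros Hv Hj. unfold red_share.
  replace (K + 2 - v =? 1) with false by (symmetry; apply Nat.eqb_neq; lia).
  destruct (Nat.eqb_spec (K + 2 - v) (K + 1)).
  - replace (varphi P j =? 0) with false by (symmetry; apply Nat.eqb_neq; lia). reflexivity.
  - replace (varphi P j <? K + 2 - (K + 2 - v)) with false by (symmetry; apply Nat.ltb_ge; lia).
    reflexivity.
Qed.

Lemma paired_share_ge_1 v i j : (1 <= v <= K)%nat -> (1 <= varphi P j)%nat ->
  1 <= blue_share (K + 2 - v) i + red_share (K + 2 - v) j.
Proof.
  intros Hv Hj. destruct (Nat.eq_dec v 1) as [->|Hv1].
  - rewrite red_share_one by lia. pose proof (blue_share_range (K + 2 - 1) i). lra.
  - unfold blue_share, red_share.
    replace (K + 2 - v =? 1) with false by (symmetry; apply Nat.eqb_neq; lia).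
    replace (K + 2 - v =? K + 1) with false by (symmetry; apply Nat.eqb_neq; lia).
    destruct (phi i <? K + 2 - (K + 2 - v)), (varphi P j <? K + 2 - (K + 2 - v)); lra.
Qed.

(* With m = K + 2 - varphi j0, only (i,?) bins with phi i >= varphi j0 get share 1/2,
   and [unmergeable] excludes them. *)
Lemma exists_covering_weighting L st : invariant L st ->
  exists m, (1 <= m <= K + 1)%nat /\ forall b, In b (bins st) -> 1 <= bin_share m b.
Proof.
  intros [HG HC _ _ _ _ _ _]. rewrite Forall_forall in HG.
  destruct (min_red_label (map lab (bins st))) as [Hnone|[j0 [Hj0 Hmin]]].
  - exists 1%nat. split; [lia|]. intros b Hb. specialize (HG b Hb).
    unfold bin_share, well_labelled in *.
    assert (Hlab : In (lab b) (map lab (bins st))) by (apply in_map; auto).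
    destruct (lab b) as [a|a|a|a c]; try (unfold blue_share; simpl; lra).
    + destruct (Hnone a Hlab).
    + pose proof (red_share_range 1 c). unfold blue_share. simpl. lra.
  - assert (Hj0' : (1 <= j0 <= k)%nat /\ ~ Delta K < t j0).
    { apply in_map_iff in Hj0. destruct Hj0 as [b0 [E Hb0]].
      specialize (HG b0 Hb0). unfold well_labelled in HG. rewrite E in HG. tauto. }
    destruct Hj0' as [Hj0r Hj0s]. destruct (varphi_spec j0 Hj0r Hj0s) as [Hv _].
    exists (K + 2 - varphi P j0)%nat. split; [lia|].
    intros b Hb. specialize (HG b Hb). unfold bin_share, well_labelled in *.
    assert (Hlab : In (lab b) (map lab (bins st))) by (apply in_map; auto).
    destruct (lab b) as [a|a|a|a c].
    + rewrite blue_share_one by lia. lra.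
    + destruct (Nat.lt_ge_cases (phi a) (varphi P j0)).
      * rewrite blue_share_one by lia. lra.
      * exfalso. apply (HC a j0 Hlab Hj0), gamma_fits; try tauto.
        split; [lia | apply phi_range; tauto].
    + rewrite red_share_one by (try apply Hmin; auto). lra.
    + destruct (varphi_spec c ltac:(tauto) ltac:(tauto)). apply paired_share_ge_1; lia.
Qed.

Lemma red_bins_gamma_0 i B : Forall well_labelled B -> gamma P i = 0%nat -> red_bins i B = 0%nat.
Proof.
  intros HG Hg. induction HG as [|b B Hb HB IH]; [reflexivity|].
  change (red_bins i (b :: B)) with ((if has_red_label i b then 1 else 0) + red_bins i B)%nat.
  rewrite IH. unfold has_red_label. unfold well_labelled in Hb.
  destruct (lab b) as [a|a|a|a c]; split_eqb; try reflexivity;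
    pose proof (gamma_pos i ltac:(tauto)); lia.
Qed.

(* The slack 3 is one non-full blue bin, one non-full red bin and the rounding of e_i. *)
Lemma shares_le_item_weight m L st i : invariant L st -> (1 <= i <= k)%nat ->
  blue_share m i * INR (blue_bins i (bins st)) + red_share m i * INR (red_bins i (bins st))
  <= INR (type_count i L) * item_weight m i + 3.
Proof.
  intros [HG _ HJ Hblue Hred Hs He _] Hi.
  destruct (HJ i) as [Jb Jr]. rewrite <- (Hs i Hi). destruct (He i Hi) as [He1 He2].
  pose proof (alpha_range i Hi). pose proof (blue_share_range m i). pose proof (red_share_range m i).
  set (s := INR (scnt st i)) in *. set (e := INR (ecnt st i)) in *.
  assert (Hbeta : 1 <= INR (beta P i)) by (apply (le_INR 1), beta_pos, Hi).
  apply le_INR in Jb. rewrite mult_INR, !plus_INR in Jb.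
  assert (Hitems : INR (blue_items i (bins st)) = s - e) by (unfold s, e; rewrite <- (Hblue i), plus_INR; lra).
  assert (Hbins : INR (blue_bins i (bins st)) <= (1 - alpha i) / INR (beta P i) * s + 2).
  { apply (Rmult_le_reg_r (INR (beta P i))); [lra|].
    replace (((1 - alpha i) / INR (beta P i) * s + 2) * INR (beta P i))
      with ((1 - alpha i) * s + 2 * INR (beta P i)) by (field; lra). nra. }
  unfold item_weight, rdiv.
  destruct (Nat.eqb_spec (gamma P i) 0) as [Hg|Hg].
  - rewrite (red_bins_gamma_0 i _ HG Hg). simpl. nra.
  - assert (Hgamma : 1 <= INR (gamma P i)) by (apply (le_INR 1); lia).
    apply le_INR in Jr. rewrite mult_INR, !plus_INR, Hred in Jr. fold e in Jr.
    assert (Hrbins : INR (red_bins i (bins st)) <= alpha i / INR (gamma P i) * s + 1).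
    { apply (Rmult_le_reg_r (INR (gamma P i))); [lra|].
      replace ((alpha i / INR (gamma P i) * s + 1) * INR (gamma P i))
        with (alpha i * s + INR (gamma P i)) by (field; lra). nra. }
    nra.
Qed.

Lemma sumW_le_maxW m L : (1 <= m <= K + 1)%nat -> sumW P m L <= maxW P L.
Proof.
  intros Hm. unfold maxW.
  assert (Hin : In m (seq 1 (K + 1))) by (apply in_seq; lia).
  induction (seq 1 (K + 1)) as [|a l IH]; [contradiction|].
  destruct Hin as [->|Hin]; simpl; [apply Rmax_l|].
  eapply Rle_trans; [apply IH, Hin | apply Rmax_r].
Qed.

Lemma nbins_le_sumW L st : Forall (fun x => 0 < x <= 1) L -> Run P L st ->
  exists m, (1 <= m <= K + 1)%nat /\ INR (nbins st) <= sumW P m L + (3 * INR k + 1).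
Proof.
  intros Hsizes HR. pose proof (run_invariant L st Hsizes HR) as Hinv.
  destruct (exists_covering_weighting L st Hinv) as [m [Hm Hcov]].
  exists m. split; [exact Hm|].
  pose proof (length_le_total_share m _ Hcov) as Hlen.
  rewrite total_share_by_types in Hlen by apply Hinv.
  assert (Htypes : sumR (fun i => blue_share m i * INR (blue_bins i (bins st))
                                  + red_share m i * INR (red_bins i (bins st))) (seq 1 k)
                   <= sumR (fun i => INR (type_count i L) * item_weight m i + 3) (seq 1 k)).
  { apply sumR_le. intros i Hi. apply in_seq in Hi. apply shares_le_item_weight; [exact Hinv | lia]. }
  rewrite (sumR_plus (fun i => INR (type_count i L) * item_weight m i) (fun _ => 3)),
    sumR_const, length_seq in Htypes.
  pose proof (nf_count_bound _ _ _ _ eps_lt_1 (inv_nf _ _ Hinv)).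
  pose proof (sumW_by_types m L Hsizes).
  unfold nbins. rewrite plus_INR. lra.
Qed.
End SuperHarmonic.

Theorem theorem1 (P : SHParams) :
  admissible P ->
  exists C : R,
    forall (L : list R) (st : State),
      Forall (fun x => 0 < x <= 1) L ->
      Run P L st ->
      INR (nbins st) <= maxW P L + C.
Proof.
  intros HA. exists (3 * INR (sh_k P) + 1). intros L st Hsizes HR.
  destruct (nbins_le_sumW P HA L st Hsizes HR) as [m [Hm Hle]].
  pose proof (sumW_le_maxW P m L Hm). lra.
Qed.
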